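(* The tuple $(p,\sqrt{1-p^2})$ is not simulable.
   Context: Let $p\in[0,1]$ be an unknown parameter and let $|p\rangle=\sqrt{p}|0\rangle+\sqrt{1-p}|1\rangle$. For a complex function $h(p)$ write $|f_h\rangle=\frac{1}{\sqrt{1+|h(p)|^2}}(h(p)|0\rangle+|1\rangle)$. A tuple $(k_0(p),k_1(p))$ of complex functions with $|k_0|^2+|k_1|^2=1$ is called simulable if, starting from an unbounded supply of copies of $|p\rangle$, one can produce the single-qubit state $|f_{k_0/k_1}\rangle=k_0(p)|0\rangle+k_1(p)|1\rangle$ (up to a global phase) in finitely many steps with nonzero success probability, where each step applies a unitary transformation or a measurement (in the computational basis) to the current state together with auxiliary qubits; the operations may not depend on $p$. Auxiliary qubits may be other simulable states or constant states $|a_c\rangle=\frac{1}{\sqrt{|a|^2+1}}(a|0\rangle+|1\rangle)$ with $a\in\mathbb{C}$ a constant independent of $p$. *)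

From HB Require Import structures.
From mathcomp Require Import all_boot all_order all_algebra.
From mathcomp Require Import complex.
From mathcomp Require Import reals.
Set Implicit Arguments. Unset Strict Implicit. Unset Printing Implicit Defensive.
Import Order.TTheory GRing.Theory Num.Theory.
Local Open Scope ring_scope.

(* Quantum simulability of single-qubit states depending on a parameter
   p in [0,1] (quantum-to-quantum Bernoulli factory).
   Complex numbers are R[i] for a real field R (realType). *)

Section Simulable.
Variable R : realType.
Local Notation C := (R[i]).

(* A p-dependent single-qubit state: p |-> (amplitude of |0>, amplitude of |1>). *)
Definition qstate := R -> C * C.

Definition pstate : qstate :=
  fun p => ((Num.sqrt p)%:C%C, (Num.sqrt (1 - p))%:C%C).

Definition cstate (a : C) : qstate :=
  fun _ => let s := (Num.sqrt (complex.Re a ^+ 2 + complex.Im a ^+ 2 + 1))%:C%C in (a / s, 1 / s).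

Definition amp (v : C * C) (b : bool) : C := if b then v.2 else v.1.

(* product state of the n qubits inp 0, ..., inp (n-1), qubit i being bit i
   of the computational-basis index *)
Definition prod_state (n : nat) (inp : 'I_n -> qstate) (p : R) : 'cV[C]_(2 ^ n) :=
  \col_(j < 2 ^ n) \prod_(i < n) amp (inp i p) (odd (j %/ 2 ^ i)).

(* amplitude of a column vector at a natural-number index (0 if out of range) *)
Definition at_index (N : nat) (v : 'cV[C]_N) (k : nat) : C :=
  \sum_(j < N | val j == k) v j 0.

(* One run (branch) of a protocol on n.+1 qubits: prepare the product of the
   inputs, apply the p-independent unitary U, measure qubits 1..n in the
   computational basis and post-select outcome string m (bit l-1 of m is the
   outcome of qubit l); the (unnormalised) post-measurement state of qubit 0
   is returned.  Its squared norm is the probability of this branch. *)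
Definition branch_out (n : nat) (inp : 'I_n.+1 -> qstate) (U : 'M[C]_(2 ^ n.+1))
  (m : nat) (p : R) : C * C :=
  let v := U *m prod_state inp p in
  (at_index v (2 * m)%N, at_index v (2 * m).+1).

(* A state k (normalised on [0,1]) is
   simulable if there is a finite family of branches (a finite protocol;
   a protocol may try several independent attempts in sequence) such that
   for every p in [0,1], each branch outputs, up to normalisation and a
   global phase, the state k p (or has probability 0), and some branch has
   nonzero probability. *)
Inductive simulable : qstate -> Prop :=
| Simulable (k : qstate) (nb : nat) (ns : 'I_nb -> nat)
    (inp : forall b : 'I_nb, 'I_(ns b).+1 -> qstate)
    (U : forall b : 'I_nb, 'M[C]_(2 ^ (ns b).+1))
    (m : 'I_nb -> nat) :
    (forall p : R, 0 <= p <= 1 ->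
       `|(k p).1| ^+ 2 + `|(k p).2| ^+ 2 = 1) ->
    (forall (b : 'I_nb) (i : 'I_(ns b).+1),
       inp b i = pstate \/ (exists a : C, inp b i = cstate a) \/ simulable (inp b i)) ->
    (forall b : 'I_nb, U b \is unitarymx) ->
    (forall p : R, 0 <= p <= 1 ->
       (forall b : 'I_nb, exists c : C,
          branch_out (inp b) (U b) (m b) p = (c * (k p).1, c * (k p).2))
       /\ (exists b : 'I_nb, branch_out (inp b) (U b) (m b) p != (0, 0))) ->
    simulable k.

Definition simulable_tuple (k0 k1 : R -> C) : Prop :=
  simulable (fun p => (k0 p, k1 p)).

End Simulable.

(* Put p = (2u/(1+u^2))^2 with u in [0,1].  Then |p> is proportional to the
   polynomial pair (2u, 1-u^2), constant states are constant pairs, and a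
   protocol branch multiplies out its inputs and applies a constant linear map,
   so every simulable state is, at each u, proportional to one of finitely many
   pairs (A(u), B(u)) of complex polynomials.  For the target state this forces
   (4u^2 B)^2 = (u^4 + 6u^2 + 1) ((1 - u^2) A)^2 at each u in [0,1]; as only
   finitely many pairs occur, one of these identities holds for infinitely many
   u, hence as polynomials.  But u^4 + 6u^2 + 1 has a simple root, so it is not
   the square of a rational function, and the pair must vanish. *)

From HB Require Import structures.
From mathcomp Require Import all_boot all_order all_algebra.
From mathcomp Require Import complex.
From mathcomp Require Import reals.
From mathcomp Require Import boolp.
From mathcomp Require Import ring.
Set Implicit Arguments. Unset Strict Implicit. Unset Printing Implicit Defensive.
Import Order.TTheory GRing.Theory Num.Theory.
Local Open Scope ring_scope.

Lemma finite_image_of_choices (I : finType) (T : choiceType) (V : eqType)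
    (S : I -> seq T) (F : (I -> T) -> V) :
  exists L : seq V, forall f, (forall i, f i \in S i) -> F f \in L.
Proof.
pose s := flatten [seq S i | i <- enum I].
exists [seq F (fun i => ssval (g i)) | g : {ffun I -> seq_sub s}] => f Sf.
have fs i : f i \in s by apply/flattenP; exists (S i); rewrite ?map_f ?mem_enum.
apply/imageP; exists [ffun i => SeqSub (fs i)] => //.
by congr F; apply: funext => i; rewrite ffunE.
Qed.

Section Multiplicity.
Variable F : fieldType.
Implicit Types (x : F) (p A B D : {poly F}).

Lemma mup0 x : mup x 0 = 0%N.
Proof.
rewrite /mup; case: arg_maxnP => [|[[|n] //]]; first by rewrite dvdp0.
by rewrite size_poly0.
Qed.

Lemma mup_simple_root p x : root p x -> ~~ root p^`() x -> mup x p = 1%N.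
Proof.
move=> /factor_theorem [q ->]; rewrite derivM derivXsubC mulr1 /root hornerD.
rewrite hornerM hornerXsubC subrr mulr0 add0r => qx.
by rewrite mupMr // -[_ - _]expr1 mup_XsubCX eqxx.
Qed.

Lemma odd_mup_sqr_ratio_eq0 x D A B : odd (mup x D) -> B ^+ 2 = D * A ^+ 2 -> A = 0.
Proof.
move=> oddD E; apply/eqP; apply: contraTT oddD => A0.
have [->|D0] := eqVneq D 0; first by rewrite mup0.
have B0 : B != 0.
  by apply: contraTneq (mulf_neq0 D0 (expf_neq0 2 A0)) => B0; rewrite -E B0 expr0n /= eqxx.
move/(congr1 (mup x)): E; rewrite !mupM ?expf_neq0 // !addnn => /(congr1 odd).
by rewrite oddD !odd_double addbF => <-.
Qed.

End Multiplicity.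

Section Pairs.
Variable F : nzRingType.

Definition scale2 (c : F) (v : F * F) : F * F := (c * v.1, c * v.2).

Definition horner2 (ab : {poly F} * {poly F}) (x : F) : F * F := (ab.1.[x], ab.2.[x]).

End Pairs.

Section Quartic.
Variable F : numClosedFieldType.

Definition quartic : {poly F} := 'X^4 + 6%:R *: 'X^2 + 1.

Lemma horner_quartic x : quartic.[x] = x ^+ 4 + 6%:R * x ^+ 2 + 1.
Proof. by rewrite !hornerE. Qed.

Lemma quartic_simple_root : exists x, mup x quartic = 1%N.
Proof.
have [x qx] : exists x, root quartic x.
  apply/closed_rootP; rewrite /quartic -addrA size_polyDl ?size_polyXn //.
  rewrite (leq_ltn_trans (size_polyD _ _)) // size_poly1 gtn_max /=.
  by rewrite (leq_ltn_trans (size_scale_leq _ _)) // size_polyXn.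
exists x; apply: mup_simple_root => //.
have dq : quartic^`().[x] = 4%:R * x * (x ^+ 2 + 3%:R).
  by rewrite /quartic !derivE /= !hornerE /=; ring.
have sq8 : (x ^+ 2 + 3%:R) ^+ 2 = 8%:R.
  move: qx; rewrite /root horner_quartic => /eqP q0.
  by apply/eqP; rewrite -subr_eq0 -q0; apply/eqP; ring.
rewrite /root dq !mulf_neq0 ?pnatr_eq0 //.
  by apply: contraTneq qx => ->; rewrite /root horner_quartic !expr0n /= mulr0 !add0r oner_eq0.
by apply: contra_eq_neq sq8 => ->; rewrite expr0n /= eq_sym pnatr_eq0.
Qed.

Definition defect (ab : {poly F} * {poly F}) : {poly F} :=
  (4%:R *: 'X^2 * ab.2) ^+ 2 - quartic * ((1 - 'X^2) * ab.1) ^+ 2.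

Lemma horner_defect ab x : (defect ab).[x] =
  (4%:R * x ^+ 2 * ab.2.[x]) ^+ 2 - quartic.[x] * ((1 - x ^+ 2) * ab.1.[x]) ^+ 2.
Proof. by rewrite !hornerE. Qed.

Lemma defect_eq0 ab : defect ab = 0 -> ab = (0, 0).
Proof.
case: ab => A B /eqP; rewrite subr_eq0 => /eqP /= E.
have [x mux] := quartic_simple_root; have oddq : odd (mup x quartic) by rewrite mux.
have X2_neq0 : 1 - 'X^2 != 0 :> {poly F}.
  by rewrite -opprB oppr_eq0 -polyC1 monic_neq0 ?monicXnsubC.
have X4_neq0 : 4%:R *: 'X^2 != 0 :> {poly F}.
  by rewrite scaler_eq0 pnatr_eq0 negb_or monic_neq0 ?monicXn.
have A0 : A = 0.
  by have /eqP := odd_mup_sqr_ratio_eq0 oddq E; rewrite mulf_eq0 (negbTE X2_neq0) => /eqP.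
move: E; rewrite A0 mulr0 expr0n mulr0 => /eqP.
by rewrite expf_eq0 mulf_eq0 (negbTE X4_neq0) => /eqP ->.
Qed.

End Quartic.

Section RealParameter.
Variable R : rcfType.
Local Notation C := R[i].
Implicit Types u : R.

Lemma poly_eq0_on_unit_interval (q : {poly C}) :
  (forall u, 0 <= u <= 1 -> root q u%:C%C) -> q = 0.
Proof.
move=> q01; have [/eqP|n_gt0] := posnP (size q); first by rewrite size_poly_eq0 => /eqP.
pose n := size q; pose rs := [seq (i%:R / n%:R : R)%:C%C | i <- iota 0 n].
apply: (@roots_geq_poly_eq0 _ _ rs); last by rewrite size_map size_iota.
  apply/allP => _ /mapP [i + ->]; rewrite mem_iota add0n => lt_in; apply: q01.
  by rewrite divr_ge0 ?ler0n //= ler_pdivrMr ?ltr0n // mul1r ler_nat ltnW.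
rewrite map_inj_in_uniq ?iota_uniq // => i j _ _ /complexI /(mulIf _).
by rewrite invr_eq0 pnatr_eq0 -lt0n => /(_ n_gt0) /eqP; rewrite eqr_nat => /eqP.
Qed.

Lemma zero_mem_of_roots_cover (qs : seq {poly C}) :
  (forall u, 0 <= u <= 1 -> has (root^~ u%:C%C) qs) -> 0 \in qs.
Proof.
move=> cover; have : \prod_(q <- qs) q = 0.
  apply: poly_eq0_on_unit_interval => u /cover.
  by apply: contraLR; rewrite root_bigmul -all_predC.
by move/eqP; rewrite prodf_seq_eq0 => /hasP [q qs_q /eqP <-].
Qed.

Definition param (u : R) : R := (2%:R * u / (1 + u ^+ 2)) ^+ 2.

Lemma param_den_gt0 u : 0 < 1 + u ^+ 2.
Proof. by rewrite ltr_pwDl ?sqr_ge0. Qed.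

Lemma one_sub_param u : 1 - param u = ((1 - u ^+ 2) / (1 + u ^+ 2)) ^+ 2.
Proof. by rewrite /param; field; rewrite gt_eqF ?param_den_gt0. Qed.

Lemma param_itv u : 0 <= param u <= 1.
Proof. by rewrite sqr_ge0 -subr_ge0 one_sub_param sqr_ge0. Qed.

Lemma sqrt_param u : 0 <= u -> Num.sqrt (param u) = 2%:R * u / (1 + u ^+ 2).
Proof.
by move=> u0; rewrite sqrtr_sqr ger0_norm // divr_ge0 ?mulr_ge0 ?addr_ge0 ?sqr_ge0.
Qed.

Lemma sqrt_one_sub_param u : 0 <= u -> u <= 1 ->
  Num.sqrt (1 - param u) = (1 - u ^+ 2) / (1 + u ^+ 2).
Proof.
move=> u0 u1; rewrite one_sub_param sqrtr_sqr ger0_norm //.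
by rewrite divr_ge0 ?subr_ge0 ?exprn_ile1 ?addr_ge0 ?sqr_ge0.
Qed.

Lemma sqrt_one_sub_sqr_param u :
  (4%:R * u ^+ 2 * Num.sqrt (1 - param u ^+ 2)) ^+ 2
  = (u ^+ 4 + 6%:R * u ^+ 2 + 1) * ((1 - u ^+ 2) * param u) ^+ 2.
Proof.
have /andP [P0 P1] := param_itv u.
rewrite exprMn sqr_sqrtr ?subr_ge0 ?(exprn_ile1 _ P0 P1) // /param.
by field; rewrite gt_eqF ?param_den_gt0.
Qed.

Lemma defect_root_of_target u c ab :
  ((param u)%:C%C, (Num.sqrt (1 - param u ^+ 2))%:C%C) = scale2 c (horner2 ab u%:C%C) ->
  ab != (0, 0) /\ root (defect ab) u%:C%C.
Proof.
have := param_itv u; have := sqrt_one_sub_sqr_param u.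
move: (param u) ab => P [A B] targetR /andP [P0 P1] [EP EQ]; set x := u%:C%C.
have unit_norm : (c * A.[x]) ^+ 2 + (c * B.[x]) ^+ 2 = 1.
  rewrite -EP -EQ -!rmorphXn -rmorphD sqr_sqrtr ?subr_ge0 ?(exprn_ile1 _ P0 P1) //.
  by rewrite addrC subrK rmorph1.
split.
  apply/eqP => -[A0 B0]; move: unit_norm.
  by rewrite A0 B0 horner0 mulr0 expr0n /= addr0 => /eqP; rewrite eq_sym oner_eq0.
have c0 : c != 0.
  apply/eqP => c0; move: unit_norm.
  by rewrite c0 !mul0r expr0n /= addr0 => /eqP; rewrite eq_sym oner_eq0.
apply/eqP/(mulfI (expf_neq0 2 c0)); rewrite mulr0 horner_defect horner_quartic /=.
transitivity ((4%:R * x ^+ 2 * (c * B.[x])) ^+ 2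
   - (x ^+ 4 + 6%:R * x ^+ 2 + 1) * ((1 - x ^+ 2) * (c * A.[x])) ^+ 2); first by ring.
transitivity (((4%:R * u ^+ 2 * Num.sqrt (1 - P ^+ 2)) ^+ 2
   - (u ^+ 4 + 6%:R * u ^+ 2 + 1) * ((1 - u ^+ 2) * P) ^+ 2)%:C%C).
  by rewrite -EP -EQ; ring.
by rewrite targetR subrr rmorph0.
Qed.

End RealParameter.

Section Simulable.
Variable R : realType.
Local Notation C := R[i].
Local Notation polypair := ({poly C} * {poly C})%type.
Implicit Types (k : qstate R) (u : R).

Definition poly_param k : Prop :=
  exists S : seq polypair, forall u, 0 <= u <= 1 ->
    exists2 ab, ab \in S & exists c, k (param u) = scale2 c (horner2 ab u%:C%C).

Lemma pstate_poly_param : poly_param (@pstate R).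
Proof.
exists [:: ('X *+ 2, 1 - 'X ^+ 2)] => u /andP [u0 u1].
exists ('X *+ 2, 1 - 'X ^+ 2); first by rewrite mem_seq1.
exists ((1 + u ^+ 2)^-1)%:C%C.
rewrite /pstate sqrt_param // sqrt_one_sub_param // /scale2 /horner2 /= !hornerE.
by congr (_, _); ring.
Qed.

Lemma cstate_poly_param a : poly_param (cstate a).
Proof.
exists [:: (a%:P, 1)] => u _; exists (a%:P, 1); first by rewrite mem_seq1.
exists (Num.sqrt (complex.Re a ^+ 2 + complex.Im a ^+ 2 + 1))%:C%C^-1.
by rewrite /cstate /scale2 /horner2 /= !hornerE mulrC.
Qed.

Definition poly_amp (ab : polypair) (b : bool) : {poly C} := if b then ab.2 else ab.1.

Definition poly_prod_state n (ab : 'I_n -> polypair) : 'cV[{poly C}]_(2 ^ n) :=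
  \col_(j < 2 ^ n) \prod_(i < n) poly_amp (ab i) (odd (j %/ 2 ^ i)).

Definition poly_at_index N (v : 'cV[{poly C}]_N) (k : nat) : {poly C} :=
  \sum_(j < N | val j == k) v j 0.

Definition poly_branch_out n (U : 'M[C]_(2 ^ n.+1)) (m : nat) (ab : 'I_n.+1 -> polypair) :
  polypair :=
  let v := map_mx polyC U *m poly_prod_state ab in
  (poly_at_index v (2 * m)%N, poly_at_index v (2 * m).+1).

Lemma prod_state_horner n (inp : 'I_n -> qstate R) (ab : 'I_n -> polypair) cs p x :
  (forall i, inp i p = scale2 (cs i) (horner2 (ab i) x)) ->
  prod_state inp p = (\prod_i cs i) *: map_mx (horner_eval x) (poly_prod_state ab).
Proof.
move=> inpE; apply/matrixP => j k; rewrite !mxE horner_evalE horner_prod -big_split.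
by apply: eq_bigr => i _; rewrite inpE /amp /poly_amp; case: (odd _).
Qed.

Lemma branch_out_horner n (inp : 'I_n.+1 -> qstate R) U m (ab : 'I_n.+1 -> polypair) cs p x :
  (forall i, inp i p = scale2 (cs i) (horner2 (ab i) x)) ->
  branch_out inp U m p = scale2 (\prod_i cs i) (horner2 (poly_branch_out U m ab) x).
Proof.
move=> inpE; rewrite /branch_out (prod_state_horner inpE) -scalemxAr.
have UE : map_mx (horner_eval x) (map_mx polyC U) = U.
  by apply/matrixP => i j; rewrite !mxE horner_evalE hornerC.
rewrite -[in LHS]UE -map_mxM /poly_branch_out /at_index /poly_at_index.
by congr (_, _); rewrite /= horner_sum mulr_sumr; apply: eq_bigr => j _; rewrite !mxE.
Qed.

Lemma branch_out_poly_param n (inp : 'I_n.+1 -> qstate R) U m :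
  (forall i, poly_param (inp i)) -> poly_param (branch_out inp U m).
Proof.
move=> /choice [S inpS]; have [L branchL] := finite_image_of_choices S (poly_branch_out U m).
exists L => u u01.
have /choice [abc inpE] : forall i, exists abc : polypair * C,
    abc.1 \in S i /\ inp i (param u) = scale2 abc.2 (horner2 abc.1 u%:C%C).
  by move=> i; have [ab Sab [c e]] := inpS i u u01; exists (ab, c).
exists (poly_branch_out U m (fun i => (abc i).1)).
  by apply: branchL => i; case: (inpE i).
by exists (\prod_i (abc i).2); apply: branch_out_horner => i; case: (inpE i).
Qed.

Lemma branches_poly_param k (nb : nat) (ns : 'I_nb -> nat)
    (inp : forall b : 'I_nb, 'I_(ns b).+1 -> qstate R)
    (U : forall b : 'I_nb, 'M[C]_(2 ^ (ns b).+1)) (m : 'I_nb -> nat) :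
  (forall b i, poly_param (inp b i)) ->
  (forall p, 0 <= p <= 1 ->
     (forall b, exists c, branch_out (inp b) (U b) (m b) p = scale2 c (k p))
     /\ (exists b, branch_out (inp b) (U b) (m b) p != (0, 0))) ->
  poly_param k.
Proof.
move=> inp_param out.
have /choice [T branchT] := fun b => branch_out_poly_param (U b) (m b) (inp_param b).
exists (flatten [seq T b | b <- enum 'I_nb]) => u u01.
have [prop [b nz]] := out _ (param_itv u).
have [ab Tab [c e]] := branchT b u u01.
have [c' e'] := prop b.
exists ab; first by apply/flatten_mapP; exists b; rewrite ?mem_enum.
have c'0 : c' != 0 by apply: contraNneq nz => c'0; rewrite e' c'0 /scale2 !mul0r.
exists (c'^-1 * c); move: e; rewrite e' => -[e1 e2].
by rewrite /scale2 -!mulrA -e1 -e2 !mulKf //; case: (k _).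
Qed.

Lemma input_poly_param (q : qstate R) :
  q = @pstate R \/ (exists a, q = cstate a) \/ poly_param q -> poly_param q.
Proof.
by case=> [->|[[a ->]|//]]; [exact: pstate_poly_param | exact: cstate_poly_param].
Qed.

(* A Fixpoint rather than induction: the recursive occurrence of [simulable]
   sits under a disjunction, for which the generated induction principle
   provides no hypothesis. *)
Fixpoint simulable_poly_param k (sim_k : simulable k) {struct sim_k} : poly_param k :=
  match sim_k with
  | Simulable k nb ns inp U m _ inp_adm _ out =>
      branches_poly_param (fun b i => input_poly_param
        match inp_adm b i with
        | or_introl e => or_introl e
        | or_intror (or_introl e) => or_intror (or_introl e)
        | or_intror (or_intror s) => or_intror (or_intror (simulable_poly_param s))
        end) out
  end.

End Simulable.

Theorem mainTheorem3 (R : realType) :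
  ~ simulable_tuple (fun p : R => p%:C%C) (fun p : R => (Num.sqrt (1 - p ^+ 2))%:C%C).
Proof.
move=> /simulable_poly_param [S targetS].
pose qs := [seq q <- map (@defect _) S | q != 0].
suff : 0 \in qs by rewrite mem_filter eqxx.
apply: zero_mem_of_roots_cover => u u01.
have [ab Sab [c targetE]] := targetS u u01.
have [ab0 root_ab] := defect_root_of_target targetE.
apply/hasP; exists (defect ab) => //.
by rewrite mem_filter map_f // andbT; apply: contraNneq ab0 => /defect_eq0 ->.
Qed.
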